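(* For either choice $\zeta\in\{q,-q^3\}$, the functions $\mathcal{F}(\lambda_1,\dots,\lambda_{L-1}\mid v_1,v_2)=\langle\bar0|\mathcal{E}(\lambda_{L-1})\cdots\mathcal{E}(\lambda_1)\mathcal{B}(v_2)\mathcal{B}(v_1)|0\rangle$ and $\bar{\mathcal{F}}(v_1,v_2\mid\lambda_1,\dots,\lambda_{L-1})=\langle\bar0|\mathcal{B}(v_2)\mathcal{B}(v_1)\mathcal{E}(\lambda_{L-1})\cdots\mathcal{E}(\lambda_1)|0\rangle$ are polynomials of degree $2L-1$ in each variable $x_i=e^{2\lambda_i}$ ($1\le i\le L-1$) separately, and also of degree $2L-1$ in each variable $y_1=e^{2v_1}$ and $y_2=e^{2v_2}$.
   Context: Let $q\in\mathbb{C}\setminus\{0\}$ (with a fixed choice of $q^{1/2}$) and $\zeta\in\{q,-q^3\}$ ($\zeta=q$: Fateev–Zamolodchikov model; $\zeta=-q^3$: Izergin–Korepin model). For $\lambda\in\mathbb{C}$ put $x=e^{2\lambda}$ and define $a(\lambda)=(x-\zeta)(x-q^2)$, $b(\lambda)=q(x-1)(x-\zeta)$, $c(\lambda)=(1-q^2)(x-\zeta)$, $\bar c(\lambda)=x(1-q^2)(x-\zeta)$, and for $\alpha,\beta\in\{1,2,3\}$, with $\beta'=4-\beta$: $d_{\alpha,\beta}(\lambda)=q(x-1)(x-\zeta)+x(q^2-1)(\zeta-1)$ if $\alpha=\beta=2$; $d_{\alpha,\beta}(\lambda)=(x-1)[(x-\zeta)+x(q^2-1)]$ if $\alpha=\beta\neq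 2$; $d_{\alpha,\beta}(\lambda)=(q^2-1)[\zeta(x-1)q^{(\alpha-\beta)/2}-\delta_{\alpha,\beta'}(x-\zeta)]$ if $\alpha<\beta$; $d_{\alpha,\beta}(\lambda)=x(q^2-1)[(x-1)q^{(\alpha-\beta)/2}-\delta_{\alpha,\beta'}(x-\zeta)]$ if $\alpha>\beta$. Let $e_1,e_2,e_3$ be the standard basis of $\mathbb{C}^3$ and $E_{\alpha,\beta}$ the unit matrices. Define $\mathcal{R}(\lambda)\in\mathrm{End}(\mathbb{C}^3\otimes\mathbb{C}^3)$ as the $9\times 9$ matrix in the ordered basis $e_1\otimes e_1,e_1\otimes e_2,e_1\otimes e_3,e_2\otimes e_1,e_2\otimes e_2,e_2\otimes e_3,e_3\otimes e_1,e_3\otimes e_2,e_3\otimes e_3$ (indices $1,\dots,9$) whose only nonzero entries (row, column) are: $(1,1)=a$; $(2,2)=b$, $(2,4)=c$; $(3,3)=d_{1,1}$, $(3,5)=d_{1,2}$, $(3,7)=d_{1,3}$; $(4,2)=\bar c$, $(4,4)=b$; $(5,3)=d_{2,1}$, $(5,5)=d_{2,2}$, $(5,7)=d_{2,3}$; $(6,6)=b$, $(6,8)=c$; $(7,3)=d_{3,1}$, $(7,5)=d_{3,2}$, $(7,7)=d_{3,3}$; $(8,6)=\bar c$, $(8,8)=b$; $(9,9)=a$ (all evaluated at $\lambda$). Fix $L\ge1$ and inhomogeneities $\mu_1,\dots,\mu_L\in\mathbb{C}$. With $V_a=V_1=\dots=V_L=\mathbb{C}^3$, let $\mathcal{T}(\lambda)=\mathcal{R}_{a1}(\lambda-\mu_1)\cdots\mathcal{R}_{aL}(\lambda-\mu_L)\in\mathrm{End}(V_a\otimes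 V_1\otimes\cdots\otimes V_L)$, where $\mathcal{R}_{aj}$ acts as $\mathcal{R}$ on $V_a\otimes V_j$. Write $\mathcal{T}(\lambda)=\sum_{\alpha,\beta}E_{\alpha,\beta}\otimes\mathcal{T}_\alpha^\beta(\lambda)$ and set $\mathcal{B}(\lambda)=\mathcal{T}_1^2(\lambda)$, $\mathcal{E}(\lambda)=\mathcal{T}_1^3(\lambda)$, operators on $V_1\otimes\cdots\otimes V_L$. Let $|0\rangle=e_1^{\otimes L}$ and let $\langle\bar0|$ be the dual vector of $e_3^{\otimes L}$. *)

From mathcomp Require Import all_boot all_algebra.
From mathcomp Require Import reals sequences trigo.
From mathcomp.real_closed Require Import complex.

Set Implicit Arguments.
Unset Strict Implicit.
Unset Printing Implicit Defensive.
Import GRing.Theory Num.Theory.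
Local Open Scope ring_scope.
Local Open Scope complex_scope.

Definition cexp {R : realType} (z : R[i]) : R[i] :=
  (expR (complex.Re z))%:C * (cos (complex.Im z) +i* sin (complex.Im z)).

Section RMatrix.
Variable R : realType.
Local Notation C := R[i].

(* s is the fixed square root q^{1/2}; q := s^2.  zeta is the parameter. *)
Variables (s zeta : C).
Definition qq : C := s ^+ 2.

(* entries of the R-matrix as functions of x = e^{2 lambda};
   indices alpha, beta are 1-based as in the paper. *)
Definition ra (x : C) : C := (x - zeta) * (x - qq ^+ 2).
Definition rb (x : C) : C := qq * (x - 1) * (x - zeta).
Definition rc (x : C) : C := (1 - qq ^+ 2) * (x - zeta).
Definition rcbar (x : C) : C := x * (1 - qq ^+ 2) * (x - zeta).
Definition rd (al be : nat) (x : C) : C :=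
  if al == be then
    (if al == 2 then qq * (x - 1) * (x - zeta) + x * (qq ^+ 2 - 1) * (zeta - 1)
     else (x - 1) * ((x - zeta) + x * (qq ^+ 2 - 1)))
  else if (al < be)%N then
    (qq ^+ 2 - 1) * (zeta * (x - 1) * s ^ (al%:Z - be%:Z)
                     - (al + be == 4)%:R * (x - zeta))
  else
    x * (qq ^+ 2 - 1) * ((x - 1) * s ^ (al%:Z - be%:Z)
                         - (al + be == 4)%:R * (x - zeta)).

(* the 9x9 matrix, (row, column) 1-based as in the paper *)
Definition rentry (x : C) (r c : nat) : C :=
  match r, c with
  | 1, 1 => ra x
  | 2, 2 => rb x | 2, 4 => rc x
  | 3, 3 => rd 1 1 x | 3, 5 => rd 1 2 x | 3, 7 => rd 1 3 x
  | 4, 2 => rcbar x | 4, 4 => rb x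
  | 5, 3 => rd 2 1 x | 5, 5 => rd 2 2 x | 5, 7 => rd 2 3 x
  | 6, 6 => rb x | 6, 8 => rc x
  | 7, 3 => rd 3 1 x | 7, 5 => rd 3 2 x | 7, 7 => rd 3 3 x
  | 8, 6 => rcbar x | 8, 8 => rb x
  | 9, 9 => ra x
  | _, _ => 0
  end.

Definition Rmat (lam : C) : 'M[C]_9 :=
  \matrix_(i < 9, j < 9) rentry (cexp (2 * lam)) i.+1 j.+1.

(* basis index of e_a (x) e_b (0-based a b) in the ordered basis *)
Definition idx9 (a b : 'I_3) : 'I_9 := inord (3 * a + b).

Definition Rent (lam : C) (a b c d : 'I_3) : C := Rmat lam (idx9 a b) (idx9 c d).

(* quantum space V_1 (x) ... (x) V_L: basis vectors indexed by states *)
Definition state (L : nat) := {ffun 'I_L -> 'I_3}.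

(* matrix element <i| T_al^be(lam) |j> of the monodromy matrix
   T(lam) = R_{a1}(lam - mu_1) ... R_{aL}(lam - mu_L) *)
Definition Tent (L : nat) (mu : 'I_L -> C) (lam : C) (al be : 'I_3)
    (i j : state L) : C :=
  \sum_(g : {ffun 'I_L.+1 -> 'I_3} | (g ord0 == al) && (g ord_max == be))
    \prod_(k < L) Rent (lam - mu k) (g (widen_ord (leqnSn L) k)) (i k)
                       (g (lift ord0 k)) (j k).

Definition i1 : 'I_3 := inord 0.
Definition i2 : 'I_3 := inord 1.
Definition i3 : 'I_3 := inord 2.

(* B(lam) = T_1^2(lam), E(lam) = T_1^3(lam) *)
Definition Bop L mu lam := @Tent L mu lam i1 i2.
Definition Eop L mu lam := @Tent L mu lam i1 i3.

Definition opapp L (O : state L -> state L -> C) (v : state L -> C) : state L -> C :=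
  fun i => \sum_(j : state L) O i j * v j.

(* |0> = e_1^{(x)L} and <0bar| = dual of e_3^{(x)L} *)
Definition vac L : state L -> C := fun i => (i == [ffun=> i1])%:R.
Definition covac L (v : state L -> C) : C := v [ffun=> i3].

Definition Ffun L (mu : 'I_L -> C) (lam : 'I_L.-1 -> C) (v1 v2 : C) : C :=
  covac (foldl (fun w k => opapp (Eop mu (lam k)) w)
               (opapp (Bop mu v2) (opapp (Bop mu v1) (@vac L)))
               (enum 'I_L.-1)).

Definition Fbarfun L (mu : 'I_L -> C) (lam : 'I_L.-1 -> C) (v1 v2 : C) : C :=
  covac (opapp (Bop mu v2) (opapp (Bop mu v1)
    (foldl (fun w k => opapp (Eop mu (lam k)) w) (@vac L) (enum 'I_L.-1)))).

End RMatrix.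

Definition upd {n : nat} {T : Type} (f : 'I_n -> T) (i : 'I_n) (t : T) : 'I_n -> T :=
  fun j => if j == i then t else f j.

From mathcomp Require Import all_boot all_algebra.
From mathcomp Require Import reals sequences trigo.
From mathcomp.real_closed Require Import complex.
From mathcomp Require Import ring zify.
Import GRing.Theory Num.Theory.
Local Open Scope ring_scope.
Set Implicit Arguments.
Unset Strict Implicit.
Unset Printing Implicit Defensive.

(** Every entry of [R(lambda)] is a polynomial of degree at most 2 in
    [x = e^{2 lambda}], and the entries that raise the auxiliary index
    ([c] and [d_{alpha,beta}] with [alpha < beta]) have degree at most 1.
    A matrix element of [T_alpha^beta] with [alpha < beta] is a sum over
    paths of auxiliary indices from [alpha] to [beta] of products of [L]
    entries; each path raises the index at least once, so every product has
    degree at most [2L - 1].  The functions [F] and [Fbar] are linear in each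
    of the operators [B(v_1)], [B(v_2)], [E(lambda_j)], so each of them
    inherits this degree bound in each variable separately. *)

Lemma cexpD (R : realType) (a b : R[i]) : cexp (a + b) = cexp a * cexp b.
Proof.
case: a => a1 a2; case: b => b1 b2; rewrite /cexp /= exp.expRD cosD sinD.
by apply/eqP; rewrite eq_complex /=; apply/andP; split; apply/eqP; ring.
Qed.

Section PolyIn.
Variables (C : comNzRingType) (T : Type) (e : T -> C).

Definition poly_in (n : nat) (f : T -> C) :=
  exists2 p : {poly C}, (size p <= n.+1)%N & forall t, f t = p.[e t].

Lemma poly_in_ext n f g : f =1 g -> poly_in n f -> poly_in n g.
Proof. by move=> fg [p sp fp]; exists p => // t; rewrite -fg. Qed.

Lemma poly_in_leq n m f : (n <= m)%N -> poly_in n f -> poly_in m f.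
Proof. by move=> nm [p sp fp]; exists p => //; apply: leq_trans sp _. Qed.

Lemma poly_in_cst c : poly_in 0 (fun _ => c).
Proof. by exists c%:P => [|t]; rewrite ?hornerC ?size_polyC_leq1. Qed.

Lemma poly_in_var : poly_in 1 e.
Proof. by exists 'X => [|t]; rewrite ?hornerX ?size_polyX. Qed.

Lemma poly_in_add n m f g :
  poly_in n f -> poly_in m g -> poly_in (maxn n m) (fun t => f t + g t).
Proof.
move=> [p sp fp] [q sq gq]; exists (p + q) => [|t]; last by rewrite hornerD fp gq.
by rewrite (leq_trans (size_polyD _ _)) //; move: sp sq; lia.
Qed.

Lemma poly_in_opp n f : poly_in n f -> poly_in n (fun t => - f t).
Proof. by move=> [p sp fp]; exists (- p) => [|t]; rewrite ?size_polyN ?hornerN ?fp. Qed.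

Lemma poly_in_mul n m f g :
  poly_in n f -> poly_in m g -> poly_in (n + m) (fun t => f t * g t).
Proof.
move=> [p sp fp] [q sq gq]; exists (p * q) => [|t]; last by rewrite hornerM fp gq.
by rewrite (leq_trans (size_polyMleq _ _)) //; move: sp sq; lia.
Qed.

Lemma poly_in_sum (I : Type) (r : seq I) (P : pred I) n (F : I -> T -> C) :
  (forall i, P i -> poly_in n (F i)) ->
  poly_in n (fun t => \sum_(i <- r | P i) F i t).
Proof.
move=> FP; elim: r => [|i r IHr].
  by apply: poly_in_ext (poly_in_leq (leq0n n) (poly_in_cst 0)) => t; rewrite big_nil.
have [Pi | nPi] := boolP (P i).
  rewrite -[n]maxnn; apply: poly_in_ext (poly_in_add (FP i Pi) IHr) => t.
  by rewrite big_cons Pi.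
by apply: poly_in_ext IHr => t; rewrite big_cons (negbTE nPi).
Qed.

Lemma poly_in_prod (I : Type) (r : seq I) (d : I -> nat) (F : I -> T -> C) :
  (forall i, poly_in (d i) (F i)) ->
  poly_in (\sum_(i <- r) d i) (fun t => \prod_(i <- r) F i t).
Proof.
move=> FP; elim: r => [|i r IHr].
  by rewrite big_nil; apply: poly_in_ext (poly_in_cst 1) => t; rewrite big_nil.
by rewrite big_cons; apply: poly_in_ext (poly_in_mul (FP i) IHr) => t; rewrite big_cons.
Qed.

Lemma poly_in_size n f : (0 < n)%N -> poly_in n.-1 f ->
  exists p : {poly C}, (size p <= n)%N /\ forall t, f t = p.[e t].
Proof. by move=> n_gt0 [p sp fp]; exists p; rewrite -(prednK n_gt0). Qed.

End PolyIn.

Lemma ascent_exists (f : nat -> nat) n :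
  (f 0 < f n)%N -> exists2 k, (k < n)%N & (f k < f k.+1)%N.
Proof.
elim: n => [|n IHn] f0n; first by rewrite ltnn in f0n.
have [fn_lt | fn_ge] := ltnP (f n) (f n.+1); first by exists n.
by have [k kn fk] := IHn (leq_trans f0n fn_ge); exists k => //; apply: ltnW.
Qed.

Lemma ord_ascent_exists L (g : 'I_L.+1 -> nat) : (g ord0 < g ord_max)%N ->
  exists k : 'I_L, (g (widen_ord (leqnSn L) k) < g (lift ord0 k))%N.
Proof.
move=> g0L; have [|k kL gk] := @ascent_exists (fun n => g (inord n)) L.
  have -> : inord 0 = ord0 :> 'I_L.+1 by apply/val_inj; rewrite /= inordK.
  by have -> : inord L = ord_max :> 'I_L.+1 by apply/val_inj; rewrite /= inordK.
exists (Ordinal kL).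
have -> : widen_ord (leqnSn L) (Ordinal kL) = inord k.
  by apply/val_inj; rewrite /= inordK // ltnS ltnW.
by have -> : lift ord0 (Ordinal kL) = inord k.+1 by apply/val_inj; rewrite /= inordK.
Qed.

Lemma sum_ascent_bound L (P : pred 'I_L) k0 : P k0 ->
  (\sum_(k < L) (if P k then 1 else 2) <= (2 * L).-1)%N.
Proof.
move=> Pk0; rewrite (bigD1 k0) //= Pk0.
have rest : (\sum_(k < L | k != k0) (if P k then 1 else 2) <= #|predC1 k0| * 2)%N.
  by rewrite -sum_nat_const leq_sum // => k _; case: ifP.
apply: leq_trans (leq_add (leqnn 1) rest) _.
by rewrite cardC1 card_ord; have := ltn_ord k0; lia.
Qed.

Section Monodromy.
Variables (R : realType) (s zeta : R[i]).

Ltac poly_in_expr :=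
  first [ eapply poly_in_cst | eapply poly_in_var
        | eapply poly_in_add; [poly_in_expr | poly_in_expr]
        | eapply poly_in_opp; poly_in_expr
        | eapply poly_in_mul; [poly_in_expr | poly_in_expr] ].

Lemma rentry_poly_in (T : Type) (e : T -> R[i]) (c : R[i]) (a b a' b' : 'I_3) :
  poly_in e (if (a < a')%N then 1 else 2)
    (fun t => rentry s zeta (e t * c) (idx9 a b).+1 (idx9 a' b').+1).
Proof.
case: a => [[|[|[|a]]] Ha] //; case: b => [[|[|[|b]]] Hb] //;
case: a' => [[|[|[|a']]] Ha'] //; case: b' => [[|[|[|b']]] Hb'] //;
rewrite /idx9 /= !inordK //= /rentry /rd /ra /rb /rc /rcbar /=;
(eapply poly_in_leq; last poly_in_expr); done.
Qed.

Lemma Tent_poly_in L (mu : 'I_L -> R[i]) (al be : 'I_3) (x y : state L) :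
  (al < be)%N ->
  poly_in (fun t => cexp (2 * t)) (2 * L).-1
    (fun t => Tent s zeta mu t al be x y).
Proof.
move=> al_lt_be; apply: poly_in_sum => g /andP[/eqP g0 /eqP gL].
pose ascent k := (g (widen_ord (leqnSn L) k) < g (lift ord0 k))%N.
have [k0 ascent_k0] : exists k0, ascent k0.
  by apply: (ord_ascent_exists (g := fun j => g j : nat)); rewrite g0 gL.
apply: poly_in_leq (sum_ascent_bound ascent_k0) _.
apply: poly_in_prod => k.
apply: poly_in_ext (rentry_poly_in _ (cexp (- (2 * mu k))) _ _ _ _) => t.
by rewrite /Rent /Rmat mxE mulrBr cexpD.
Qed.

End Monodromy.

Section Operators.
Variables (R : realType) (L : nat) (T : Type) (e : T -> R[i]).

Definition poly_vec n (W : T -> state L -> R[i]) :=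
  forall x, poly_in e n (fun t => W t x).

Definition poly_op n (O : T -> state L -> state L -> R[i]) :=
  forall x y, poly_in e n (fun t => O t x y).

Lemma poly_vec_cst w : poly_vec 0 (fun _ => w).
Proof. by move=> x; apply: poly_in_cst. Qed.

Lemma poly_op_cst O : poly_op 0 (fun _ => O).
Proof. by move=> x y; apply: poly_in_cst. Qed.

Lemma opapp_poly_in n m O W :
  poly_op n O -> poly_vec m W -> poly_vec (n + m) (fun t => opapp (O t) (W t)).
Proof. by move=> PO PW x; apply: poly_in_sum => j _; apply: poly_in_mul. Qed.

Lemma opapp_poly_in_op n O w :
  poly_op n O -> poly_vec n (fun t => opapp (O t) w).
Proof. by move=> PO; rewrite -[n]addn0; apply: opapp_poly_in PO (poly_vec_cst w). Qed.

Lemma opapp_poly_in_vec n O W :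
  poly_vec n W -> poly_vec n (fun t => opapp O (W t)).
Proof. exact: opapp_poly_in (poly_op_cst O). Qed.

Lemma foldl_opapp_poly_in (K : Type) (ks : seq K)
    (ops : K -> T -> state L -> state L -> R[i]) (d : K -> nat) n W :
  (forall k, poly_op (d k) (ops k)) -> poly_vec n W ->
  poly_vec (\sum_(k <- ks) d k + n)
    (fun t => foldl (fun w k => opapp (ops k t) w) (W t) ks).
Proof.
move=> Pops; elim: ks n W => [|k ks IHks] n W PW /=; first by rewrite big_nil.
by rewrite big_cons addnAC addnC; apply: IHks (opapp_poly_in (Pops k) PW).
Qed.

End Operators.

Section Correlations.
Variables (R : realType) (s zeta : R[i]) (L : nat) (mu : 'I_L -> R[i]).

Let e (t : R[i]) := cexp (2 * t).
Let N := (2 * L).-1.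

Lemma Bop_poly_in : poly_op e N (fun t => Bop s zeta mu t).
Proof. by move=> x y; apply: Tent_poly_in; rewrite /i1 /i2 !inordK. Qed.

Lemma Eop_poly_in : poly_op e N (fun t => Eop s zeta mu t).
Proof. by move=> x y; apply: Tent_poly_in; rewrite /i1 /i3 !inordK. Qed.

Lemma Efold_poly_in (lam : 'I_L.-1 -> R[i]) n W : poly_vec e n W ->
  poly_vec e n (fun t =>
    foldl (fun w k => opapp (Eop s zeta mu (lam k)) w) (W t) (enum 'I_L.-1)).
Proof.
have sum0 : (\sum_(k <- enum 'I_L.-1) 0 + n = n)%N by rewrite big1_eq.
move=> PW; rewrite -sum0; apply: foldl_opapp_poly_in PW => k; exact: poly_op_cst.
Qed.

Lemma Efold_upd_poly_in (lam : 'I_L.-1 -> R[i]) i w :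
  poly_vec e N (fun t =>
    foldl (fun w k => opapp (Eop s zeta mu (upd lam i t k)) w) w (enum 'I_L.-1)).
Proof.
pose d k := if k == i then N else 0%N.
have Pops k : poly_op e (d k) (fun t => Eop s zeta mu (upd lam i t k)).
  by rewrite /d /upd; case: (k == i); [exact: Eop_poly_in | exact: poly_op_cst].
have sum_d : (\sum_(k <- enum 'I_L.-1) d k + 0 = N)%N.
  by rewrite addn0 big_enum /= -big_mkcond big_pred1_eq.
by rewrite -sum_d; apply: foldl_opapp_poly_in Pops (poly_vec_cst _ _).
Qed.

End Correlations.

Theorem lemma2p2 (R : realType) (L : nat) (s zeta : R[i]) (mu : 'I_L -> R[i]) :
  (0 < L)%N -> s != 0 -> (zeta = s ^+ 2 \/ zeta = - (s ^+ 2) ^+ 3) ->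
  (* in each x_i, 1 <= i <= L-1 *)
  (forall (lam : 'I_L.-1 -> R[i]) (v1 v2 : R[i]) (i : 'I_L.-1),
     exists p : {poly R[i]}, (size p <= 2 * L)%N /\
       forall t : R[i], Ffun s zeta mu (upd lam i t) v1 v2 = p.[cexp (2 * t)]) /\
  (forall (lam : 'I_L.-1 -> R[i]) (v1 v2 : R[i]) (i : 'I_L.-1),
     exists p : {poly R[i]}, (size p <= 2 * L)%N /\
       forall t : R[i], Fbarfun s zeta mu (upd lam i t) v1 v2 = p.[cexp (2 * t)]) /\
  (* in y_1 *)
  (forall (lam : 'I_L.-1 -> R[i]) (v2 : R[i]),
     exists p : {poly R[i]}, (size p <= 2 * L)%N /\
       forall t : R[i], Ffun s zeta mu lam t v2 = p.[cexp (2 * t)]) /\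
  (forall (lam : 'I_L.-1 -> R[i]) (v2 : R[i]),
     exists p : {poly R[i]}, (size p <= 2 * L)%N /\
       forall t : R[i], Fbarfun s zeta mu lam t v2 = p.[cexp (2 * t)]) /\
  (* in y_2 *)
  (forall (lam : 'I_L.-1 -> R[i]) (v1 : R[i]),
     exists p : {poly R[i]}, (size p <= 2 * L)%N /\
       forall t : R[i], Ffun s zeta mu lam v1 t = p.[cexp (2 * t)]) /\
  (forall (lam : 'I_L.-1 -> R[i]) (v1 : R[i]),
     exists p : {poly R[i]}, (size p <= 2 * L)%N /\
       forall t : R[i], Fbarfun s zeta mu lam v1 t = p.[cexp (2 * t)]).
Proof.
(* The degree bound holds for every [s] and [zeta]. *)
move=> L_gt0 _ _; have L2_gt0 : (0 < 2 * L)%N by rewrite muln_gt0.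
split; [|split; [|split; [|split; [|split]]]] => lam;
  [move=> v1 v2 i | move=> v1 v2 i | move=> v2 | move=> v2 | move=> v1 | move=> v1];
  apply: (poly_in_size L2_gt0); rewrite /Ffun /Fbarfun /covac; move: [ffun=> i3].
- exact: Efold_upd_poly_in.
- by apply/opapp_poly_in_vec/opapp_poly_in_vec/Efold_upd_poly_in.
- by apply/Efold_poly_in/opapp_poly_in_vec/opapp_poly_in_op/Bop_poly_in.
- by apply/opapp_poly_in_vec/opapp_poly_in_op/Bop_poly_in.
- by apply/Efold_poly_in/opapp_poly_in_op/Bop_poly_in.
- by apply/opapp_poly_in_op/Bop_poly_in.
Qed.
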